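(* For any integers $k,l\geq 1$, the equation $$[[x_1,\dots,x_k],[x_{k+1},\dots,x_{k+l}]]=\beta_{k+l}({\sf Sum}(C_{k,l}))$$ holds in $\mathbb Z\langle x_1,\dots,x_{k+l}\rangle$.
   Context: $\mathbb Z\langle x_1,\dots,x_m\rangle$ is the free associative ring on $x_1,\dots,x_m$, with bracket $[u,v]=uv-vu$ and left-normed brackets $[u_1,\dots,u_r]=[[u_1,\dots,u_{r-1}],u_r]$. $S_m$ is the symmetric group on $\{1,\dots,m\}$, with product $(\sigma\tau)(i)=\sigma(\tau(i))$. $\gamma_m$ is the additive subgroup spanned by the monomials $x_{\sigma(1)}\cdots x_{\sigma(m)}$, $\sigma\in S_m$; $\beta_m:\gamma_m\to\gamma_m$ is the homomorphism with $\beta_m(x_{\sigma(1)}\cdots x_{\sigma(m)})=[x_{\sigma(1)},\dots,x_{\sigma(m)}]$; for $T\subseteq S_m$, ${\sf Sum}(T)=\sum_{\sigma\in T}x_{\sigma(1)}\cdots x_{\sigma(m)}$. An $(s,t)$-shuffle is a pair $(\alpha,\beta)$ of strictly increasing maps $\alpha:\{1,\dots,s\}\to\{1,\dots,s+t\}$, $\beta:\{1,\dots,t\}\to\{1,\dots,s+t\}$ with disjoint images; ${\sf Sh}^1(s,t)$ is the set of those with $\alpha(1)=1$. For $k,l\geq1$, $0\leq i\leq l-1$ and $(\alpha,\beta)\in{\sf Sh}^1(l-i,i)$, let $\tilde\sigma_{\alpha,\beta,k,l}\in S_{k+l}$ be given by $\tilde\sigma(j)=j$ for $1\leq j\leq k$,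 $\tilde\sigma(k+j)=k+\beta(i+1-j)$ for $1\leq j\leq i$, and $\tilde\sigma(k+i+j)=k+\alpha(j)$ for $1\leq j\leq l-i$; let $\sigma_{\alpha,\beta,k,l}=\tilde\sigma_{\alpha,\beta,k,l}\circ(1,2)^i$, where $(1,2)$ is the transposition. Set $C_{k,l}=\{\sigma_{\alpha,\beta,k,l}\mid 0\leq i\leq l-1,\ (\alpha,\beta)\in{\sf Sh}^1(l-i,i)\}\subseteq S_{k+l}$. *)

From mathcomp Require Import all_boot all_order all_algebra all_fingroup.
Set Implicit Arguments. Unset Strict Implicit. Unset Printing Implicit Defensive.
Import GRing.Theory.
Local Open Scope ring_scope.

(* Free associative ring Z<x_1, x_2, ...>: an element is represented by a
   finite formal Z-linear combination of words (letters are nats, letter i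
   standing for x_i).  Two representations denote the same element iff all
   coefficients agree ([nceq]). *)
Definition ncpoly := seq (int * seq nat).

Definition ncX (i : nat) : ncpoly := [:: (1%R, [:: i])].
Definition ncadd (p q : ncpoly) : ncpoly := p ++ q.
Definition ncopp (p : ncpoly) : ncpoly := [seq (- t.1, t.2) | t <- p].
Definition ncscale (c : int) (p : ncpoly) : ncpoly := [seq (c * t.1, t.2) | t <- p].
Definition ncmul (p q : ncpoly) : ncpoly :=
  [seq (t.1 * u.1, t.2 ++ u.2) | t <- p, u <- q].
Definition ncbr (u v : ncpoly) : ncpoly := ncadd (ncmul u v) (ncopp (ncmul v u)).
Definition lbr (us : seq ncpoly) : ncpoly :=
  if us is u :: us' then foldl ncbr u us' else [::].

Definition nccoef (p : ncpoly) (w : seq nat) : int := \sum_(t <- p | t.2 == w) t.1.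
Definition nceq (p q : ncpoly) : Prop := forall w, nccoef p w = nccoef q w.

(* beta: the additive map sending a word x_{a_1}...x_{a_r} to [x_{a_1},...,x_{a_r}]
   (defined on all words; restricted to gamma_m it is beta_m). *)
Definition word_br (w : seq nat) : ncpoly := lbr [seq ncX i | i <- w].
Definition betaop (p : ncpoly) : ncpoly :=
  flatten [seq ncscale t.1 (word_br t.2) | t <- p].

(* Sum(T) for T a set of permutations of {1..m}; 'S_m acts on 'I_m = {0..m-1},
   position j (0-based) standing for j+1, letter x_{sigma(j+1)} = (sigma j).+1 *)
Definition Sum m (T : {set 'S_m}) : ncpoly :=
  [seq (1%R, [seq (val (s j)).+1 | j <- enum (ordinal m)]) | s : {perm (ordinal m)} <- enum T].

(* (s,t)-shuffles with alpha(1) = 1, everything 0-based: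
   a : 'I_s -> 'I_n, b : 'I_t -> 'I_n, n = s + t *)
Definition is_shuffle1 s t n (a : {ffun 'I_s -> 'I_n}) (b : {ffun 'I_t -> 'I_n}) : bool :=
  [&& [forall x : 'I_s, forall y : 'I_s, (val x < val y)%N ==> (val (a x) < val (a y))%N],
      [forall x : 'I_t, forall y : 'I_t, (val x < val y)%N ==> (val (b x) < val (b y))%N],
      [forall x : 'I_s, forall y : 'I_t, a x != b y] &
      [forall x : 'I_s, (val x == 0%N) ==> (val (a x) == 0%N)]].

Definition natf s n (f : {ffun 'I_s -> 'I_n}) (q : nat) : nat :=
  if insub q is Some x then val (f x) else 0%N.

Definition sigt k i s t n (a : {ffun 'I_s -> 'I_n}) (b : {ffun 'I_t -> 'I_n}) (p : nat) : nat :=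
  if (p < k)%N then p
  else if (p < k + i)%N then (k + natf b (i.-1 - (p - k)))%N
  else (k + natf a (p - k - i))%N.

Definition swap01 (p : nat) : nat :=
  if p == 0%N then 1%N else if p == 1%N then 0%N else p.
Definition swap01pow (i p : nat) : nat := if odd i then swap01 p else p.

Definition C (k l : nat) : {set 'S_(k + l)} :=
  [set sg : 'S_(k + l) | [exists i : 'I_l,
     [exists a : {ffun 'I_(l - i) -> 'I_l}, [exists b : {ffun 'I_i -> 'I_l},
       is_shuffle1 a b &&
       [forall p : 'I_(k + l), val (sg p) == sigt k i a b (swap01pow i (val p))]]]]].

(* Iterating the Jacobi identity [u, [L, z]] = [[u, L], z] - [[u, z], L] expands
   [u, [y_0, ..., y_n]] into the signed sum of the brackets [u, y_v0, ..., y_vn] over the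
   "valleys" v: the orderings of 0, ..., n that decrease down to 0 and increase after it,
   with sign (-1)^i where i is the position of 0.  The valleys of 0, ..., l - 1 with 0 at
   position i are, up to a shift by one, exactly the words beta(i), ..., beta(1), alpha(1), ...,
   alpha(l - i) of the shuffles (alpha, beta) in Sh^1(l - i, i).  Prefixed by x_1 ... x_k they
   give the words of the permutations in C_{k,l}, up to the factor (1,2)^i, and swapping the
   first two entries of a left-normed bracket changes its sign, which accounts for (-1)^i. *)

From mathcomp Require Import all_boot all_order all_algebra all_fingroup.
From mathcomp Require Import ring zify.
Set Implicit Arguments. Unset Strict Implicit. Unset Printing Implicit Defensive.
Import GRing.Theory.
Local Open Scope ring_scope.

Lemma nccoef_add p q w : nccoef (ncadd p q) w = nccoef p w + nccoef q w.
Proof. by rewrite /nccoef /ncadd big_cat. Qed.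

Lemma nccoef_opp p w : nccoef (ncopp p) w = - nccoef p w.
Proof. by rewrite /nccoef /ncopp big_map sumrN. Qed.

Lemma nccoef_scale c p w : nccoef (ncscale c p) w = c * nccoef p w.
Proof. by rewrite /nccoef /ncscale big_map mulr_sumr. Qed.

Lemma nccoef_flatten ps w : nccoef (flatten ps) w = \sum_(p <- ps) nccoef p w.
Proof.
elim: ps => [|p ps IH]; first by rewrite /nccoef !big_nil.
by rewrite big_cons -IH -nccoef_add.
Qed.

Lemma nccoefE p w : nccoef p w = \sum_(t <- p) (if t.2 == w then t.1 else 0).
Proof. by rewrite /nccoef big_mkcond. Qed.

Lemma nccoef_mulE p q w : nccoef (ncmul p q) w =
  \sum_(t <- p) \sum_(u <- q) (if t.2 ++ u.2 == w then t.1 * u.1 else 0).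
Proof. by rewrite nccoefE /ncmul big_allpairs_dep. Qed.

Lemma take_drop_eqE (T : eqType) (s t w : seq T) j : (j <= size w)%N ->
  (s == take j w) && (t == drop j w) = (s ++ t == w) && (size s == j).
Proof.
move=> hj; apply/andP/andP => [[/eqP -> /eqP ->] | [/eqP <- /eqP <-]].
  by rewrite cat_take_drop size_takel.
by rewrite take_size_cat // drop_size_cat.
Qed.

Lemma nccoef_mul_conv p q w : nccoef (ncmul p q) w =
  \sum_(j < (size w).+1) nccoef p (take j w) * nccoef q (drop j w).
Proof.
rewrite nccoef_mulE; symmetry.
under eq_bigr => j _ do rewrite !nccoefE mulr_suml; rewrite exchange_big.
apply: eq_bigr => t _.
under eq_bigr => j _ do rewrite mulr_sumr; rewrite exchange_big.
apply: eq_bigr => u _.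
have mul_if (a b : bool) (x y : int) :
  (if a then x else 0) * (if b then y else 0) = if a && b then x * y else 0.
  by case: a; case: b; rewrite ?mulr0 ?mul0r.
under eq_bigr => j _ do rewrite mul_if (take_drop_eqE _ _ (ltn_ord j)).
case: eqP => [ew|_]; last by rewrite big1 // => j _; rewrite andFb.
have hs : (size t.2 < (size w).+1)%N by rewrite -ew size_cat ltnS leq_addr.
rewrite (bigD1 (Ordinal hs)) //= eqxx big1 ?addr0 // => j.
by rewrite -val_eqE /= eq_sym => /negbTE ->.
Qed.

Lemma nccoef_mulDl p p' q w :
  nccoef (ncmul (ncadd p p') q) w = nccoef (ncmul p q) w + nccoef (ncmul p' q) w.
Proof. by rewrite !nccoef_mulE /ncadd big_cat. Qed.

Lemma nccoef_mulDr p q q' w :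
  nccoef (ncmul p (ncadd q q')) w = nccoef (ncmul p q) w + nccoef (ncmul p q') w.
Proof.
by rewrite !nccoef_mulE -big_split; apply: eq_bigr => t _; rewrite /ncadd big_cat.
Qed.

Lemma nccoef_mulNl p q w : nccoef (ncmul (ncopp p) q) w = - nccoef (ncmul p q) w.
Proof.
rewrite !nccoef_mulE /ncopp big_map -sumrN; apply: eq_bigr => t _.
by rewrite -sumrN; apply: eq_bigr => u _; case: ifP; rewrite ?mulNr ?oppr0.
Qed.

Lemma nccoef_mulNr p q w : nccoef (ncmul p (ncopp q)) w = - nccoef (ncmul p q) w.
Proof.
rewrite !nccoef_mulE -sumrN; apply: eq_bigr => t _.
by rewrite /ncopp big_map -sumrN; apply: eq_bigr => u _; case: ifP; rewrite ?mulrN ?oppr0.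
Qed.

Lemma nccoef_mulA p q r w :
  nccoef (ncmul p (ncmul q r)) w = nccoef (ncmul (ncmul p q) r) w.
Proof.
rewrite !nccoef_mulE /ncmul big_allpairs_dep; apply: eq_bigr => t _.
rewrite big_allpairs_dep; apply: eq_bigr => u _; apply: eq_bigr => v _ /=.
by rewrite catA mulrA.
Qed.

Lemma nccoef_br u v w : nccoef (ncbr u v) w = nccoef (ncmul u v) w - nccoef (ncmul v u) w.
Proof. by rewrite /ncbr nccoef_add nccoef_opp. Qed.

Lemma nceq_mul p p' q q' : nceq p p' -> nceq q q' -> nceq (ncmul p q) (ncmul p' q').
Proof.
by move=> hp hq w; rewrite !nccoef_mul_conv; apply: eq_bigr => j _; rewrite hp hq.
Qed.

Lemma nceq_br p p' q q' : nceq p p' -> nceq q q' -> nceq (ncbr p q) (ncbr p' q').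
Proof. by move=> hp hq w; rewrite !nccoef_br (nceq_mul hp hq) (nceq_mul hq hp). Qed.

Lemma ncbr_jacobi u v z :
  nceq (ncbr u (ncbr v z)) (ncadd (ncbr (ncbr u v) z) (ncopp (ncbr (ncbr u z) v))).
Proof.
move=> w; rewrite /ncbr.
rewrite !(nccoef_add, nccoef_opp, nccoef_mulDl, nccoef_mulDr, nccoef_mulNl,
          nccoef_mulNr, nccoef_mulA).
ring.
Qed.

Lemma nceq_foldl_br a b t : nceq a b -> nceq (foldl ncbr a t) (foldl ncbr b t).
Proof. by elim: t a b => [|x t IH] a b hab //=; apply/IH/nceq_br. Qed.

Lemma nccoef_foldl_brD a b t w : nccoef (foldl ncbr (ncadd a b) t) w =
  nccoef (foldl ncbr a t) w + nccoef (foldl ncbr b t) w.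
Proof.
elim: t a b => [|x t IH] a b /=; first exact: nccoef_add.
rewrite -IH; apply: nceq_foldl_br => w'.
by rewrite nccoef_add !nccoef_br nccoef_mulDl nccoef_mulDr; ring.
Qed.

Lemma nccoef_foldl_brN a t w : nccoef (foldl ncbr (ncopp a) t) w = - nccoef (foldl ncbr a t) w.
Proof.
elim: t a => [|x t IH] a /=; first exact: nccoef_opp.
rewrite -IH; apply: nceq_foldl_br => w'.
by rewrite nccoef_opp !nccoef_br nccoef_mulNl nccoef_mulNr; ring.
Qed.

Local Open Scope nat_scope.

Definition valley n (v : seq nat) :=
  [&& perm_eq v (iota 0 n.+1), sorted gtn (take (index 0 v) v) &
      sorted ltn (drop (index 0 v) v)].

Fixpoint valleys (n : nat) : seq (seq nat) :=
  if n is n'.+1 then [seq rcons v n | v <- valleys n'] ++ [seq n :: v | v <- valleys n']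
  else [:: [:: 0]].

Lemma iotaS_rcons m n : iota m n.+1 = rcons (iota m n) (m + n).
Proof. by rewrite -cats1 -addn1 iotaD. Qed.

Section Valley.
Variables (n : nat) (v : seq nat).
Hypothesis hv : valley n v.

Lemma valley_perm : perm_eq v (iota 0 n.+1). Proof. by case/and3P: hv. Qed.

Lemma valley_mem x : (x \in v) = (x <= n).
Proof. by rewrite (perm_mem valley_perm) mem_iota. Qed.

Lemma valley_size : size v = n.+1.
Proof. by rewrite (perm_size valley_perm) size_iota. Qed.

Lemma valley_uniq : uniq v.
Proof. by rewrite (perm_uniq valley_perm) iota_uniq. Qed.

End Valley.

Lemma sorted_ltn_rcons s x : all (ltn^~ x) s -> sorted ltn (rcons s x) = sorted ltn s.
Proof.
move=> hs; rewrite -cats1 !(sorted_pairwise ltn_trans) pairwise_cat allrel1r hs.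
by rewrite /= !andbT.
Qed.

Lemma gtn_trans : transitive gtn.
Proof. exact: rev_trans ltn_trans. Qed.

Lemma valley_rcons n v : valley n.+1 (rcons v n.+1) = valley n v.
Proof.
rewrite /valley iotaS_rcons -!cats1 perm_cat2r.
case hp: (perm_eq v _); rewrite ?andFb // !andTb.
have h0 : 0 \in v by rewrite (perm_mem hp) mem_iota.
rewrite index_cat h0 takel_cat; last by rewrite ltnW // index_mem.
rewrite drop_cat index_mem h0.
rewrite cats1 sorted_ltn_rcons //; apply/allP => x /mem_drop.
by rewrite (perm_mem hp) mem_iota.
Qed.

Lemma valley_cons n v : valley n.+1 (n.+1 :: v) = valley n v.
Proof.
rewrite /valley iotaS_rcons perm_sym perm_rcons perm_cons perm_sym.
case hp: (perm_eq v _); rewrite ?andFb // !andTb [index _ _]/= [take _ _]/= [drop _ _]/=.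
rewrite [sorted _ _]/= (path_sortedE gtn_trans).
suff -> : all (ltn^~ n.+1) (take (index 0 v) v) by [].
by apply/allP => x /mem_take; rewrite (perm_mem hp) mem_iota.
Qed.

Lemma sorted_gtn_head x s y : sorted gtn (x :: s) -> y \in x :: s -> y <= x.
Proof.
rewrite /= (path_sortedE gtn_trans) inE => /andP[/allP hs _] /orP[/eqP -> // | hy].
exact/ltnW/hs.
Qed.

Lemma sorted_ltn_last s x y : sorted ltn (rcons s x) -> y \in rcons s x -> y <= x.
Proof.
rewrite -cats1 (sorted_pairwise ltn_trans) pairwise_cat allrel1r.
case/and3P=> /allP hs _ _; rewrite mem_cat inE orbC => /orP[/eqP -> // | hy].
exact/ltnW/hs.
Qed.

Lemma valleyS_inv n v : valley n.+1 v -> exists v', v = rcons v' n.+1 \/ v = n.+1 :: v'.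
Proof.
move=> hv; have /and3P[_ ht hd] := hv.
have hmax : n.+1 \in v by rewrite (valley_mem hv).
have hle x : x \in v -> x <= n.+1 by rewrite (valley_mem hv).
move: hmax; rewrite -[v](cat_take_drop (index 0 v)) mem_cat => /orP[hx | hx].
- case Et: (take _ v) ht hx => [//|x s] ht hx.
  have ex : x = n.+1.
    apply/eqP; rewrite eqn_leq (sorted_gtn_head ht hx) hle //.
    by rewrite -[v](cat_take_drop (index 0 v)) Et mem_head.
  by exists (s ++ drop (index 0 v) v); right; rewrite -[v](cat_take_drop (index 0 v)) Et ex.
- case/lastP Ed: (drop _ v) hd hx => [//|s x] hd hx.
  have ex : x = n.+1.
    apply/eqP; rewrite eqn_leq (sorted_ltn_last hd hx) hle //.
    by rewrite -[v](cat_take_drop (index 0 v)) Ed mem_cat mem_rcons mem_head orbT.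
  exists (take (index 0 v) v ++ s); left.
  by rewrite -[v](cat_take_drop (index 0 v)) Ed ex rcons_cat.
Qed.

Lemma mem_valleys n v : (v \in valleys n) = valley n v.
Proof.
elim: n v => [|n IH] v.
  rewrite inE; apply/eqP/idP => [-> // | hv].
  exact: (perm_small_eq _ (valley_perm hv)).
apply/idP/idP => [|hv].
  by rewrite mem_cat => /orP[] /mapP[v' hv' ->]; rewrite ?valley_rcons ?valley_cons -IH.
rewrite mem_cat; have [v' [ev | ev]] := valleyS_inv hv; subst v; apply/orP.
  by left; apply: map_f; rewrite IH -valley_rcons.
by right; apply: map_f; rewrite IH -valley_cons.
Qed.

Lemma uniq_valleys n : uniq (valleys n).
Proof.
elim: n => [|n IH] //=.
have cons_inj : injective (cons n.+1) by move=> x y [].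
rewrite cat_uniq (map_inj_uniq (@rcons_injl _ n.+1)) (map_inj_uniq cons_inj) IH /= andbT.
apply/hasPn => _ /mapP[v hv ->]; apply/negP => /mapP[v' hv' e].
move: hv hv'; rewrite !mem_valleys => hv hv'.
case: v' hv' e => [|y v'] hv' /=; first by have := valley_size hv'.
by case=> ey _; have := valley_mem hv' y; rewrite -ey mem_head ltnn.
Qed.

Lemma lbr_rcons s x : s != [::] -> lbr (rcons s x) = ncbr (lbr s) x.
Proof. by case: s => // y s _; rewrite /lbr rcons_cons -cats1 foldl_cat. Qed.

(* In the Jacobi identity [u, [L, z]] = [[u, L], z] - [[u, z], L] with z = Y (n + 1), the first
   term yields the valleys ending with n + 1, the second those starting with it. *)
Lemma ncbr_lbr_valleys (Y : nat -> ncpoly) n u tail :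
  nceq (foldl ncbr (ncbr u (lbr [seq Y j | j <- iota 0 n.+1])) tail)
       (flatten [seq ncscale ((-1) ^+ index 0 v)%R (foldl ncbr u ([seq Y j | j <- v] ++ tail))
                | v <- valleys n]).
Proof.
elim: n u tail => [|n IH] u tail w.
  by rewrite /= nccoef_add nccoef_scale expr0 mul1r /nccoef big_nil addr0.
rewrite iotaS_rcons map_rcons lbr_rcons ?(map_f, mem_iota) //=.
rewrite (nceq_foldl_br _ (ncbr_jacobi _ _ _)) nccoef_foldl_brD nccoef_foldl_brN /=.
rewrite (IH u (Y n.+1 :: tail)) (IH (ncbr u (Y n.+1)) tail).
rewrite map_cat flatten_cat nccoef_add !nccoef_flatten !big_map -sumrN.
congr (_ + _)%R; apply: eq_big_seq => v; rewrite mem_valleys => hv; rewrite !nccoef_scale.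
  by rewrite map_rcons cat_rcons -cats1 index_cat (valley_mem hv).
by rewrite /= exprS mulN1r mulNr.
Qed.

Lemma natfE s n (f : {ffun 'I_s -> 'I_n}) q (hq : q < s) : natf f q = f (Ordinal hq).
Proof. by rewrite /natf insubT. Qed.

Lemma natf_lt s n (f : {ffun 'I_s -> 'I_n}) q : 0 < n -> natf f q < n.
Proof. by rewrite /natf; case: (insub q) => [x _|//]; apply: ltn_ord. Qed.

Lemma shuffle1P s t n (a : {ffun 'I_s -> 'I_n}) (b : {ffun 'I_t -> 'I_n}) :
  is_shuffle1 a b ->
  [/\ forall x y, x < y -> y < s -> natf a x < natf a y,
      forall x y, x < y -> y < t -> natf b x < natf b y,
      forall x y, x < s -> y < t -> natf a x != natf b y &
      0 < s -> natf a 0 = 0].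
Proof.
case/and4P=> /forallP incr_a /forallP incr_b /forallP disj /forallP a0; split.
- move=> x y hxy hy; have hx := ltn_trans hxy hy; rewrite (natfE _ hx) (natfE _ hy).
  by have /forallP/(_ (Ordinal hy))/implyP := incr_a (Ordinal hx); apply.
- move=> x y hxy hy; have hx := ltn_trans hxy hy; rewrite (natfE _ hx) (natfE _ hy).
  by have /forallP/(_ (Ordinal hy))/implyP := incr_b (Ordinal hx); apply.
- move=> x y hx hy; rewrite (natfE _ hx) (natfE _ hy).
  by have /forallP/(_ (Ordinal hy)) := disj (Ordinal hx).
- by move=> hs; rewrite (natfE _ hs); have /implyP/(_ isT)/eqP := a0 (Ordinal hs).
Qed.

(* beta(i) - 1, ..., beta(1) - 1, alpha(1) - 1, ..., alpha(l - i) - 1: the values of tilde sigma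
   at k + 1, ..., k + l, minus k + 1. *)
Definition shuffle_word l i s t (a : {ffun 'I_s -> 'I_l}) (b : {ffun 'I_t -> 'I_l}) :=
  [seq if q < i then natf b (i.-1 - q) else natf a (q - i) | q <- iota 0 l].
Arguments shuffle_word l i {s t} a b.

Lemma size_shuffle_word l i s t (a : {ffun 'I_s -> 'I_l}) (b : {ffun 'I_t -> 'I_l}) :
  size (shuffle_word l i a b) = l.
Proof. by rewrite size_map size_iota. Qed.

Lemma nth_shuffle_word l i s t (a : {ffun 'I_s -> 'I_l}) (b : {ffun 'I_t -> 'I_l}) q :
  q < l -> nth 0 (shuffle_word l i a b) q = if q < i then natf b (i.-1 - q) else natf a (q - i).
Proof. by move=> hq; rewrite (nth_map 0) ?size_iota // nth_iota. Qed.

Lemma sorted_map_iota (r : rel nat) f m n :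
  (forall q, q.+1 < n -> r (f (m + q)) (f (m + q.+1))) -> sorted r [seq f x | x <- iota m n].
Proof.
move=> h; apply/(sortedP 0) => q; rewrite size_map size_iota => hq.
by rewrite !(nth_map 0) ?size_iota ?nth_iota ?(ltn_trans (ltnSn q)) //; apply: h.
Qed.

Section ShuffleWord.
Variables (l i : nat) (a : {ffun 'I_(l - i) -> 'I_l}) (b : {ffun 'I_i -> 'I_l}).
Hypotheses (hil : i < l) (hab : is_shuffle1 a b).

Let w := shuffle_word l i a b.

Lemma uniq_shuffle_word : uniq w.
Proof.
have [incr_a incr_b disj _] := shuffle1P hab.
apply/(uniqP 0) => x y; rewrite !inE size_shuffle_word => hx hy.
rewrite !nth_shuffle_word //.
case: ifP => hxi; case: ifP => hyi => e.
- case: (ltngtP x y) => // hxy.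
    by have := incr_b (i.-1 - y) (i.-1 - x); rewrite e ltnn => /(_ ltac:(lia) ltac:(lia)).
  by have := incr_b (i.-1 - x) (i.-1 - y); rewrite e ltnn => /(_ ltac:(lia) ltac:(lia)).
- by have := disj (y - i) (i.-1 - x); rewrite e eqxx => /(_ ltac:(lia) ltac:(lia)).
- by have := disj (x - i) (i.-1 - y); rewrite e eqxx => /(_ ltac:(lia) ltac:(lia)).
- case: (ltngtP x y) => // hxy.
    by have := incr_a (x - i) (y - i); rewrite e ltnn => /(_ ltac:(lia) ltac:(lia)).
  by have := incr_a (y - i) (x - i); rewrite e ltnn => /(_ ltac:(lia) ltac:(lia)).
Qed.

Lemma perm_shuffle_word : perm_eq w (iota 0 l).
Proof.
apply: uniq_perm uniq_shuffle_word (iota_uniq 0 l) _.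
have hsub : {subset w <= iota 0 l}.
  move=> x /mapP[q _ ->]; rewrite mem_iota /=.
  by case: ifP => _; apply/natf_lt/(leq_ltn_trans (leq0n i)).
by have [] := uniq_min_size uniq_shuffle_word hsub; rewrite ?size_shuffle_word size_iota.
Qed.

Lemma index0_shuffle_word : index 0 w = i.
Proof.
have [_ _ _ a0] := shuffle1P hab.
have <- : nth 0 w i = 0 by rewrite nth_shuffle_word // ltnn subnn a0 // subn_gt0.
by rewrite index_uniq ?size_shuffle_word // uniq_shuffle_word.
Qed.

Lemma shuffle_word_valley : valley l.-1 w.
Proof.
have [incr_a incr_b _ _] := shuffle1P hab.
apply/and3P; split; rewrite ?index0_shuffle_word.
- by rewrite prednK ?perm_shuffle_word //; apply: leq_ltn_trans hil.
- rewrite /w /shuffle_word -map_take take_iota; apply: sorted_map_iota => q hq.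
  by rewrite /= add0n !ifT; try lia; apply: incr_b; lia.
- rewrite /w /shuffle_word -map_drop drop_iota add0n; apply: sorted_map_iota => q hq.
  by rewrite !ifF; try lia; apply: incr_a; lia.
Qed.

End ShuffleWord.

Lemma valley_shuffle_word l v : 0 < l -> valley l.-1 v ->
  exists i : 'I_l, exists a : {ffun 'I_(l - i) -> 'I_l}, exists b : {ffun 'I_i -> 'I_l},
    is_shuffle1 a b /\ shuffle_word l i a b = v.
Proof.
move=> hl hv.
have hsz : size v = l by rewrite (valley_size hv) prednK.
have hvl j : nth 0 v j < l.
  case: (ltnP j (size v)) => hj; last by rewrite nth_default.
  by rewrite -(prednK hl) ltnS -(valley_mem hv) mem_nth.
have hu := valley_uniq hv.
have [i ei] : exists i : 'I_l, index 0 v = i.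
  have hi : index 0 v < l by rewrite -hsz index_mem (valley_mem hv).
  by exists (Ordinal hi).
have hi := ltn_ord i.
have /and3P[_ ht hd] := hv; rewrite ei in ht hd.
exists i, [ffun q : 'I_(l - i) => Ordinal (hvl (i + q))],
  [ffun q : 'I_i => Ordinal (hvl (i.-1 - q))].
split.
- apply/and4P; split; apply/forallP => x; try apply/forallP => y.
  + apply/implyP => hxy; rewrite !ffunE /=.
    have := sorted_ltn_nth ltn_trans 0 hd x y; rewrite !inE size_drop hsz !nth_drop.
    by apply; rewrite ?ltn_ord.
  + apply/implyP => hxy; rewrite !ffunE /=.
    have hx := ltn_ord x; have hy := ltn_ord y; have {}hxy : x < y := hxy.
    have := sorted_ltn_nth gtn_trans 0 ht (i.-1 - y) (i.-1 - x).
    by rewrite !inE size_take hsz hi !nth_take; lia.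
  + have hx := ltn_ord x; have hy := ltn_ord y.
    by rewrite -val_eqE !ffunE /= nth_uniq ?hsz //; first apply/eqP; lia.
  + by apply/implyP => /eqP hx0; rewrite ffunE /= hx0 addn0 -ei nth_index // (valley_mem hv).
- apply: (@eq_from_nth _ 0); rewrite size_shuffle_word // => q hq.
  rewrite nth_shuffle_word //; case: ifP => hqi.
    have hq' : i.-1 - q < i by lia.
    by rewrite (natfE _ hq') ffunE /=; congr (nth _ _ _); lia.
  have hq' : q - i < l - i by lia.
  by rewrite (natfE _ hq') ffunE /=; congr (nth _ _ _); lia.
Qed.

Definition lift_word k (v : seq nat) := iota 1 k ++ [seq k.+1 + j | j <- v].
Definition swap12 (w : seq nat) := if w is x :: y :: r then y :: x :: r else w.

(* With v the shuffle word of (alpha, beta), this is the word x_sigma(1) ... x_sigma(k+l) of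
   sigma_{alpha,beta,k,l}: the composition with (1,2)^i swaps the first two letters iff i is odd. *)
Definition twisted_word k i v := if odd i then swap12 (lift_word k v) else lift_word k v.

Definition perm_word m (s : 'S_m) := [seq (val (s j)).+1 | j <- enum 'I_m].

Lemma size_lift_word k v : size (lift_word k v) = k + size v.
Proof. by rewrite size_cat size_iota size_map. Qed.

Lemma nth_lift_word k v q : q < k + size v ->
  nth 0 (lift_word k v) q = if q < k then q.+1 else k.+1 + nth 0 v (q - k).
Proof.
move=> hq; rewrite nth_cat size_iota; case: ifP => hqk; first by rewrite nth_iota.
by rewrite (nth_map 0) //; lia.
Qed.

Lemma lift_word_inj k : injective (lift_word k).
Proof.
move=> v v' /(congr1 (drop k)); rewrite !drop_size_cat ?size_iota //.
by apply: inj_map => x y /addnI.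
Qed.

Lemma perm_swap12 w : perm_eq (swap12 w) w.
Proof. by case: w => [|x [|y r]] //; apply/seq.permP => P /=; lia. Qed.

Lemma swap12K : involutive swap12.
Proof. by case=> [|x [|y r]]. Qed.

Lemma nth_swap12 w p : 1 < size w -> nth 0 (swap12 w) p = nth 0 w (swap01 p).
Proof. by case: w => [|x [|y r]] //= _; case: p => [|[|p]]. Qed.

Lemma size_twisted_word k i v : size (twisted_word k i v) = k + size v.
Proof.
by rewrite /twisted_word; case: odd; rewrite ?(perm_size (perm_swap12 _)) size_lift_word.
Qed.

Lemma perm_twisted_word k l i v :
  perm_eq v (iota 0 l) -> perm_eq (twisted_word k i v) (iota 1 (k + l)).
Proof.
move=> hv; have hw : perm_eq (lift_word k v) (iota 1 (k + l)).
  rewrite iotaD add1n perm_cat2l -[k.+1]addn0 iotaDl addn0; exact: perm_map.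
by rewrite /twisted_word; case: odd => //; apply: perm_trans (perm_swap12 _) hw.
Qed.

Lemma head_twisted_word k i v : 0 < k -> 0 < size v ->
  (head 0 (twisted_word k i v) == 1) = ~~ odd i.
Proof.
by case: k => // [[|k]] _; case: v => // x v _; rewrite /twisted_word; case: odd.
Qed.

Lemma sigt_twisted_word k l i s t (a : {ffun 'I_s -> 'I_l}) (b : {ffun 'I_t -> 'I_l}) p :
  0 < k -> 0 < l -> p < k + l ->
  (sigt k i a b (swap01pow i p)).+1 = nth 0 (twisted_word k i (shuffle_word l i a b)) p.
Proof.
move=> hk hl hp.
have -> : nth 0 (twisted_word k i (shuffle_word l i a b)) p =
          nth 0 (lift_word k (shuffle_word l i a b)) (swap01pow i p).
  rewrite /twisted_word /swap01pow; case: odd => //.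
  by rewrite nth_swap12 // size_lift_word size_shuffle_word; lia.
have hq : swap01pow i p < k + l.
  by rewrite /swap01pow /swap01; case: odd => //; case: eqP => ?; [lia | case: eqP => ?; lia].
rewrite nth_lift_word ?size_shuffle_word // /sigt; case: ifP => // hqk.
by rewrite nth_shuffle_word; [case: ifP; case: ifP | ]; lia.
Qed.

Lemma twisted_word_inj k n v v' : 0 < k -> valley n v -> valley n v' ->
  twisted_word k (index 0 v) v = twisted_word k (index 0 v') v' -> v = v'.
Proof.
move=> hk hv hv' e.
have hsz w : valley n w -> 0 < size w by move/valley_size ->.
have hodd : odd (index 0 v) = odd (index 0 v').
  apply: negb_inj.
  by rewrite -(head_twisted_word _ hk (hsz _ hv)) -(head_twisted_word _ hk (hsz _ hv')) e.
move: e; rewrite /twisted_word hodd; case: odd => e; apply: (@lift_word_inj k) => //.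
by rewrite -[lift_word k v]swap12K e swap12K.
Qed.

Lemma size_perm_word m (s : 'S_m) : size (perm_word s) = m.
Proof. by rewrite size_map size_enum_ord. Qed.

Lemma nth_perm_word m (s : 'S_m) p (hp : p < m) : nth 0 (perm_word s) p = (s (Ordinal hp)).+1.
Proof.
by rewrite (nth_map (Ordinal hp)) ?size_enum_ord // (nth_ord_enum (Ordinal hp) (Ordinal hp)).
Qed.

Lemma perm_word_inj m : injective (@perm_word m).
Proof.
move=> s s' /eq_in_map e; apply/permP => j; apply/val_inj.
by have [] := e j (mem_enum _ j).
Qed.

Lemma C_twisted_word k l (s : 'S_(k + l)) : 0 < k -> 0 < l -> s \in C k l ->
  exists2 v, v \in valleys l.-1 & perm_word s = twisted_word k (index 0 v) v.
Proof.
move=> hk hl; rewrite inE => /existsP[i /existsP[a /existsP[b /andP[hab /forallP hs]]]].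
exists (shuffle_word l i a b); first by rewrite mem_valleys shuffle_word_valley.
rewrite index0_shuffle_word //; apply: (@eq_from_nth _ 0).
  by rewrite size_twisted_word size_perm_word size_shuffle_word.
move=> p; rewrite size_perm_word => hp.
by rewrite (nth_perm_word s hp) (eqP (hs (Ordinal hp))) sigt_twisted_word.
Qed.

Lemma twisted_word_C k l v : 0 < k -> 0 < l -> v \in valleys l.-1 ->
  exists2 s : 'S_(k + l), s \in C k l & perm_word s = twisted_word k (index 0 v) v.
Proof.
move=> hk hl; rewrite mem_valleys => hv.
have [i [a [b [hab ev]]]] := valley_shuffle_word hl hv.
have ei : index 0 v = i by rewrite -ev index0_shuffle_word.
have hw : perm_eq (twisted_word k i v) (iota 1 (k + l)).
  by apply: perm_twisted_word; rewrite -(prednK hl); apply: valley_perm hv.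
have hsz : size (twisted_word k i v) = k + l by rewrite (perm_size hw) size_iota.
have hsig p : p < k + l -> (sigt k i a b (swap01pow i p)).+1 = nth 0 (twisted_word k i v) p.
  by move=> hp; rewrite -ev sigt_twisted_word.
have hlt (p : 'I_(k + l)) : sigt k i a b (swap01pow i p) < k + l.
  rewrite -ltnS hsig //.
  have : nth 0 (twisted_word k i v) p \in iota 1 (k + l) by rewrite -(perm_mem hw) mem_nth ?hsz.
  by rewrite mem_iota add1n => /andP[].
have finj : injective (fun p => Ordinal (hlt p)).
  move=> p p' /(congr1 (S \o val)) /=; rewrite !hsig // => /eqP.
  by rewrite nth_uniq ?hsz ?(perm_uniq hw) ?iota_uniq // => /eqP/val_inj.
exists (perm finj).
  rewrite inE; apply/existsP; exists i; apply/existsP; exists a; apply/existsP; exists b.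
  by rewrite hab; apply/forallP => p; rewrite permE.
rewrite ei; apply: (@eq_from_nth _ 0); rewrite size_perm_word ?hsz // => p hp.
by rewrite (nth_perm_word _ hp) permE hsig.
Qed.

Lemma perm_eq_C_valleys k l : 0 < k -> 0 < l ->
  perm_eq [seq perm_word s | s <- enum (C k l)]
          [seq twisted_word k (index 0 v) v | v <- valleys l.-1].
Proof.
move=> hk hl; apply: uniq_perm.
- by rewrite map_inj_uniq ?enum_uniq //; apply: perm_word_inj.
- rewrite map_inj_in_uniq ?uniq_valleys // => v v'; rewrite !mem_valleys.
  exact: twisted_word_inj.
move=> w; apply/mapP/mapP => [[s] | [v hv ->]].
  by rewrite mem_enum => /(C_twisted_word hk hl) [v hv ->] ->; exists v.
by have [s hs ew] := twisted_word_C hk hl hv; exists s; rewrite ?mem_enum.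
Qed.

Local Open Scope ring_scope.

Lemma nccoef_word_br_swap12 w x : (1 < size w)%N ->
  nccoef (word_br (swap12 w)) x = - nccoef (word_br w) x.
Proof.
case: w => [|a [|b r]] //= _; rewrite /word_br /lbr /= -nccoef_foldl_brN.
by apply: nceq_foldl_br => y; rewrite nccoef_opp !nccoef_br opprB.
Qed.

Lemma word_br_lift_word k v : (0 < k)%N -> word_br (lift_word k v) =
  foldl ncbr (lbr [seq ncX i | i <- iota 1 k]) [seq ncX (k.+1 + j) | j <- v].
Proof. by case: k => // k _; rewrite /word_br map_cat /= foldl_cat -map_comp. Qed.

Theorem lemma3 (k l : nat) (hk : (1 <= k)%N) (hl : (1 <= l)%N) :
  nceq (ncbr (lbr [seq ncX i | i <- iota 1 k])
             (lbr [seq ncX i | i <- iota k.+1 l]))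
       (betaop (Sum (C k l))).
Proof.
move=> w; set u := lbr [seq ncX i | i <- iota 1 k].
have -> : [seq ncX i | i <- iota k.+1 l] = [seq ncX (k.+1 + j) | j <- iota 0 l.-1.+1].
  by rewrite prednK // -[k.+1]addn0 iotaDl addn0 -map_comp.
rewrite [LHS](ncbr_lbr_valleys (fun j => ncX (k.+1 + j)) l.-1 u [::] w).
rewrite /betaop /Sum -map_comp !nccoef_flatten !big_map.
under [RHS]eq_bigr => s _ do rewrite nccoef_scale mul1r.
rewrite -(big_map (@perm_word (k + l)) xpredT (fun x => nccoef (word_br x) w)).
rewrite (perm_big _ (perm_eq_C_valleys hk hl)) big_map.
apply: eq_big_seq => v; rewrite mem_valleys => hv.
rewrite nccoef_scale cats0 -word_br_lift_word // /twisted_word -signr_odd.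
case: odd; last by rewrite expr0 mul1r.
by rewrite expr1 mulN1r nccoef_word_br_swap12 // size_lift_word (valley_size hv); lia.
Qed.
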